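(* Let $X$ be a compact metric space with metric $d$, let $f\colon X\to X$ be a continuous map with the s-limit shadowing property, let $C\in\mathcal{C}(f)$ and $D\in\mathcal{D}(C)$. Let $\mathcal{F},\mathcal{G}$ be full Furstenberg families which are compatible with $(X^n,f^{\times n})$ for all $n\ge2$, and suppose $\mathcal{F}$ is translation invariant. Let $n\ge2$ and $\delta>0$. If there is a $\delta$-distal $n$-tuple $(a_1,\dots,a_n)\in D^n$ for $f$, then for every $E\in\mathcal{D}(C)$ and every $0<r<\delta$, $V^s(E)$ is generic $(\mathcal{F},\mathcal{G})$-$n$-$r$-chaotic for $f$.
   Context: A $\delta$-chain of $f$ ($\delta>0$) is a finite sequence $(x_i)_{i=0}^k$, $k\ge1$, with $d(f(x_i),x_{i+1})\le\delta$ for $0\le i\le k-1$; it is a $\delta$-cycle if $x_0=x_k$, with length $k$. Write $x\to y$ if for every $\delta>0$ there is a $\delta$-chain from $x$ to $y$. Let $CR(f)=\{x\colon x\to x\}$; on $CR(f)$ let $x\leftrightarrow y$ iff $x\to y$ and $y\to x$; its classes are the chain components, forming $\mathcal{C}(f)$. For $C\in\mathcal{C}(f)$, $\delta>0$, let $m=m(C,\delta)$ be the gcd of the lengths of all $\delta$-cycles of $f|_C$, and for $x,y\in C$ let $x\sim_{C,\delta}y$ iff there is a $\delta$-chain of $f|_C$ from $x$ to $y$ of length divisible by $m$; $\mathcal{D}(C,\delta)$ is the set of its equivalence classes. Let $x\sim_C y$ iff $x\sim_{C,\delta}y$ for all $\delta>0$; $\mathcal{D}(C)$ is its set of classes. For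 $D\in\mathcal{D}(C)$, $D_\delta$ is the element of $\mathcal{D}(C,\delta)$ containing $D$. $W^s(C)=\{x\colon\lim_i d(f^i(x),C)=0\}$ and $V^s(D)=\bigcap_{\delta>0}\{x\in W^s(C)\colon\lim_i d(f^i(x),f^i(D_\delta))=0\}$. $f$ has the s-limit shadowing property if for every $\epsilon>0$ there is $\delta>0$ such that for every sequence $(x_i)_{i\ge0}$ with $d(f(x_i),x_{i+1})\le\delta$ for all $i$ and $d(f(x_i),x_{i+1})\to0$ there is $x\in X$ with $d(f^i(x),x_i)\le\epsilon$ for all $i$ and $d(f^i(x),x_i)\to0$. A Furstenberg family is a nonempty proper family $\mathcal{F}\subsetneq 2^{\mathbb{N}_0}$ closed under taking supersets; it is full if $\{i\in A\colon i\ge n\}\in\mathcal{F}$ for all $A\in\mathcal{F}$, $n\ge0$; translation invariant if $\{i+n\colon i\in A\}\in\mathcal{F}$ and $\{i\in\mathbb{N}_0\colon i+n\in A\}\in\mathcal{F}$ for all $A\in\mathcal{F}$, $n\ge0$. $f^{\times n}$ is the $n$-fold product map on $X^n$. $\mathcal{F}$ is compatible with $(X^n,f^{\times n})$ if for every open $U\subset X^n$ the set $\{z\in X^n\colon\{i\in\mathbb{N}_0\colon (f^{\times n})^i(z)\in U\}\in\mathcal{F}\}$ is a $G_\delta$-subset of $X^n$. $(x_1,\dots,x_n)$ is a $\delta$-distal $n$-tuple for $f$ if $\inf_{i\ge0}\min_{1\le j<k\le n}d(f^i(x_j),f^i(x_k))>\delta$. For $x_1,\dots,x_n\in X$, $r>0$: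 $S_f(x_1,\dots,x_n;r)=\{i\in\mathbb{N}_0\colon\min_{j<k}d(f^i(x_j),f^i(x_k))>r\}$ and $T_f(x_1,\dots,x_n;r)=\{i\in\mathbb{N}_0\colon\max_{j<k}d(f^i(x_j),f^i(x_k))<r\}$. $(x_1,\dots,x_n)$ is $(\mathcal{F},\mathcal{G})$-$r$-scrambled if $S_f(x_1,\dots,x_n;r)\in\mathcal{F}$ and $T_f(x_1,\dots,x_n;\epsilon)\in\mathcal{G}$ for all $\epsilon>0$. A nonempty $Y\subset X$ is generic $(\mathcal{F},\mathcal{G})$-$n$-$r$-chaotic for $f$ if the set of $(\mathcal{F},\mathcal{G})$-$r$-scrambled $n$-tuples in $Y^n$ is residual in $Y^n$ (contains a countable intersection of dense open subsets of $Y^n$). *)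

From mathcomp Require Import all_boot.
From Stdlib Require Import Reals.
Export Reals.

Set Implicit Arguments.
Unset Strict Implicit.
Unset Printing Implicit Defensive.

Section Dyn.
Variables (X : Type) (d : X -> X -> R) (f : X -> X).

Definition is_metric : Prop :=
  (forall x y, (0 <= d x y)%R) /\
  (forall x y, d x y = 0%R <-> x = y) /\
  (forall x y, d x y = d y x) /\
  (forall x y z, (d x z <= d x y + d y z)%R).

Definition mopen (U : X -> Prop) : Prop :=
  forall x, U x -> exists e, (0 < e)%R /\ forall y, (d x y < e)%R -> U y.

Definition mcompact : Prop :=
  forall (I : Type) (U : I -> X -> Prop),
    (forall i, mopen (U i)) -> (forall x, exists i, U i x) ->
    exists l : list I, forall x, exists i, List.In i l /\ U i x.

Definition mcontinuous : Prop :=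
  forall x e, (0 < e)%R -> exists h, (0 < h)%R /\
    forall y, (d x y < h)%R -> (d (f x) (f y) < e)%R.

Definition s_limit_shadowing : Prop :=
  forall eps, (0 < eps)%R -> exists del, (0 < del)%R /\
    forall xs : nat -> X,
      (forall i, (d (f (xs i)) (xs i.+1) <= del)%R) ->
      (forall e, (0 < e)%R -> exists N, forall i, (N <= i)%N ->
                 (d (f (xs i)) (xs i.+1) < e)%R) ->
      exists x, (forall i, (d (iter i f x) (xs i) <= eps)%R) /\
        (forall e, (0 < e)%R -> exists N, forall i, (N <= i)%N ->
                 (d (iter i f x) (xs i) < e)%R).

(* [chain P del x y k]: there is a del-chain (x_i)_{i=0}^k of f, k >= 1,
   from x to y all of whose points satisfy P (P = True: chains of f;
   P = C: chains of f|_C). *)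
Definition chain (P : X -> Prop) (del : R) (x y : X) (k : nat) : Prop :=
  exists xs : nat -> X, (1 <= k)%N /\ xs 0%N = x /\ xs k = y /\
    (forall i, (i <= k)%N -> P (xs i)) /\
    (forall i, (i < k)%N -> (d (f (xs i)) (xs i.+1) <= del)%R).

Definition chain_to (x y : X) : Prop :=
  forall del, (0 < del)%R -> exists k, chain (fun _ => True) del x y k.

Definition CR (x : X) : Prop := chain_to x x.

Definition chain_component (C : X -> Prop) : Prop :=
  exists x, CR x /\
    forall y, C y <-> (CR y /\ chain_to x y /\ chain_to y x).

Definition is_gcd_set (P : nat -> Prop) (m : nat) : Prop :=
  (forall k, P k -> (m %| k)%N) /\
  (forall g, (forall k, P k -> (g %| k)%N) -> (g %| m)%N).

Definition cycle_length (C : X -> Prop) (del : R) (k : nat) : Prop :=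
  exists x, C x /\ chain C del x x k.

Definition period (C : X -> Prop) (del : R) (m : nat) : Prop :=
  is_gcd_set (cycle_length C del) m.

Definition simCd (C : X -> Prop) (del : R) (x y : X) : Prop :=
  C x /\ C y /\ exists m, period C del m /\
    exists k, (m %| k)%N /\ chain C del x y k.

Definition simC (C : X -> Prop) (x y : X) : Prop :=
  forall del, (0 < del)%R -> simCd C del x y.

Definition Dclass (C D : X -> Prop) : Prop :=
  exists x, C x /\ forall y, D y <-> (C y /\ simC C x y).

Definition Ddelta (C D : X -> Prop) (del : R) (y : X) : Prop :=
  exists x, D x /\ simCd C del x y.

Definition Ws (C : X -> Prop) (x : X) : Prop :=
  forall e, (0 < e)%R -> exists N, forall i, (N <= i)%N ->
    exists c, C c /\ (d (iter i f x) c < e)%R.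

Definition Vs (C D : X -> Prop) (x : X) : Prop :=
  forall del, (0 < del)%R ->
    Ws C x /\
    forall e, (0 < e)%R -> exists N, forall i, (N <= i)%N ->
      exists c, Ddelta C D del c /\ (d (iter i f x) (iter i f c) < e)%R.

Definition open_n (n : nat) (U : ('I_n -> X) -> Prop) : Prop :=
  forall z, U z -> exists e, (0 < e)%R /\
    forall w, (forall j, (d (z j) (w j) < e)%R) -> U w.

Definition Gdelta_n (n : nat) (S : ('I_n -> X) -> Prop) : Prop :=
  exists V : nat -> ('I_n -> X) -> Prop,
    (forall k, open_n (V k)) /\ forall z, S z <-> (forall k, V k z).

Definition furstenberg (F : (nat -> Prop) -> Prop) : Prop :=
  (exists A, F A) /\ (exists A, ~ F A) /\
  (forall A B : nat -> Prop, F A -> (forall i, A i -> B i) -> F B).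

Definition full_family (F : (nat -> Prop) -> Prop) : Prop :=
  forall A n, F A -> F (fun i => A i /\ (n <= i)%N).

Definition translation_invariant (F : (nat -> Prop) -> Prop) : Prop :=
  forall A n, F A ->
    F (fun j => exists i, A i /\ j = (i + n)%N) /\ F (fun i => A (i + n)%N).

Definition compatible (F : (nat -> Prop) -> Prop) (n : nat) : Prop :=
  forall U : ('I_n -> X) -> Prop, open_n U ->
    Gdelta_n (fun z => F (fun i => U (fun j => iter i f (z j)))).

(* inf_i min_{j<k} d(f^i x_j, f^i x_k) > del *)
Definition distal_tuple (n : nat) (del : R) (a : 'I_n -> X) : Prop :=
  exists eta, (del < eta)%R /\
    forall i (j k : 'I_n), (j < k)%N ->
      (eta <= d (iter i f (a j)) (iter i f (a k)))%R.

Definition S_set (n : nat) (z : 'I_n -> X) (r : R) (i : nat) : Prop :=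
  forall j k : 'I_n, (j < k)%N -> (r < d (iter i f (z j)) (iter i f (z k)))%R.

Definition T_set (n : nat) (z : 'I_n -> X) (r : R) (i : nat) : Prop :=
  forall j k : 'I_n, (j < k)%N -> (d (iter i f (z j)) (iter i f (z k)) < r)%R.

Definition scrambled (F G : (nat -> Prop) -> Prop) (n : nat) (r : R)
    (z : 'I_n -> X) : Prop :=
  F (S_set z r) /\ forall e, (0 < e)%R -> G (T_set z e).

Definition in_pow (n : nat) (Y : X -> Prop) (z : 'I_n -> X) : Prop :=
  forall j, Y (z j).

Definition rel_open (n : nat) (Y : X -> Prop) (U : ('I_n -> X) -> Prop) : Prop :=
  (forall z, U z -> in_pow Y z) /\
  forall z, U z -> exists e, (0 < e)%R /\
    forall w, in_pow Y w -> (forall j, (d (z j) (w j) < e)%R) -> U w.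

Definition dense_in (n : nat) (Y : X -> Prop) (U : ('I_n -> X) -> Prop) : Prop :=
  forall z, in_pow Y z -> forall e, (0 < e)%R ->
    exists w, U w /\ forall j, (d (z j) (w j) < e)%R.

Definition residual (n : nat) (Y : X -> Prop) (P : ('I_n -> X) -> Prop) : Prop :=
  exists V : nat -> ('I_n -> X) -> Prop,
    (forall k, rel_open Y (V k) /\ dense_in Y (V k)) /\
    forall z, (forall k, V k z) -> P z.

Definition generic_chaotic (F G : (nat -> Prop) -> Prop) (n : nat) (r : R)
    (Y : X -> Prop) : Prop :=
  (exists y, Y y) /\
  residual Y (fun z : 'I_n -> X => in_pow Y z /\ scrambled F G r z).

End Dyn.

(* The s-limit shadowing property makes the points asymptotic to a prescribed [b] in [E]
   dense in [V^s(E)].  From [z] in [V^s(E)], a pseudo-orbit follows [z] until it is close to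
   the orbit of a point of [E_del], moves by [del]-chains inside [C] to the orbit of [b], and
   inserts cycles of [C] (there are cycles of every large multiple of the period [m(C,del)])
   so that its length is exactly the time at which it lands on that orbit; a point
   s-limit shadowing it is asymptotic to [b].  By compactness, suitable forward iterates of
   the [delta]-distal tuple in [D] converge to a tuple [b] in [E] with the same distality
   constant.  Tuples asymptotic to [b] have [S_f] eventually full, hence in the full family
   [F], and tuples asymptotic to [(b_1, ..., b_1)] have every [T_f] in [G]; both kinds are
   dense in [V^s(E)^n], and by compatibility both conditions are G_delta, so together they
   give a residual set of scrambled tuples. *)

From Stdlib Require Import Reals Lra Wf_nat ClassicalEpsilon.
From mathcomp Require Import all_boot zify.

Set Implicit Arguments.
Unset Strict Implicit.
Unset Printing Implicit Defensive.

Local Open Scope R_scope.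

Lemma inv_succ_gt0 k : 0 < / INR k.+1.
Proof. by apply/Rinv_0_lt_compat/lt_0_INR/ltP. Qed.

Lemma inv_succ_small e : 0 < e -> exists N, forall k, (N <= k)%N -> / INR k.+1 < e.
Proof.
move=> e_gt0; have [N [N_small N_gt0]] := archimed_cor1 _ e_gt0.
exists N => k le_Nk; apply: Rle_lt_trans N_small.
by apply/Rinv_le_contravar/le_INR/leP; [apply: lt_0_INR | lia].
Qed.

Lemma exists_pos_below a b : 0 < a -> 0 < b -> exists c, 0 < c /\ c <= a /\ c <= b.
Proof.
move=> a_gt0 b_gt0; exists (Rmin a b).
by split; [apply: Rmin_pos | split; [apply: Rmin_l | apply: Rmin_r]].
Qed.

Lemma finite_lower_bound_gt0 (T : finType) (g : T -> R) :
  (forall t, 0 < g t) -> exists e, 0 < e /\ forall t, e <= g t.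
Proof.
move=> g_gt0.
suff [e [e_gt0 e_le]] : exists e, 0 < e /\ forall t, t \in enum T -> e <= g t.
  by exists e; split=> // t; apply: e_le; rewrite mem_enum.
elim: (enum T) => [|t s [e [e_gt0 e_le]]]; first by exists 1; split=> [|t]; [lra | rewrite in_nil].
exists (Rmin (g t) e); split; first exact: Rmin_pos.
move=> t'; rewrite in_cons => /orP [/eqP -> | t's]; first exact: Rmin_l.
exact: Rle_trans (Rmin_r _ _) (e_le _ t's).
Qed.

Lemma additive_submonoid_gcd (L : nat -> Prop) :
  L 0%N -> (forall a b, L a -> L b -> L (a + b)%N) -> (exists k, (0 < k)%N /\ L k) ->
  exists g, (0 < g)%N /\ is_gcd_set L g /\ exists t0, forall t, (t0 <= t)%N -> L (t * g)%N.
Proof.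
move=> L0 LD [k0 [k0_gt0 Lk0]].
have LM s a : L a -> L (s * a)%N.
  by move=> La; elim: s => [|s IH]; rewrite ?mul0n // mulSn; apply: LD.
pose gap g := (0 < g)%N /\ exists Q, L Q /\ L (Q + g)%N.
have [g [[g_gt0 [Q [LQ LQg]]] g_min]] : exists g, gap g /\ forall g', gap g' -> (g <= g')%N.
  have [g [[gap_g g_least] _]] := dec_inh_nat_subset_has_unique_least_element gap
    (fun n => classic (gap n)) (ex_intro _ k0 (conj k0_gt0 (ex_intro _ 0%N (conj L0 Lk0)))).
  by exists g; split=> // g' /g_least /leP.
(* A nonzero remainder [l %% g] would be a smaller gap. *)
have g_dvd l : L l -> (g %| l)%N.
  move=> Ll; case: (posnP (l %% g)) => [r0 | r_gt0]; first by rewrite /dvdn r0.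
  suff /g_min : gap (l %% g) by have := ltn_pmod l g_gt0; lia.
  split=> //; exists (l %/ g * (Q + g))%N; split; first exact: LM.
  have -> : (l %/ g * (Q + g) + l %% g = l + l %/ g * Q)%N by have := divn_eq l g; lia.
  by apply: LD => //; apply: LM.
exists g; split=> //; split.
  split=> // g' g'_dvd.
  by rewrite -(dvdn_addr g (g'_dvd _ LQ)); apply: g'_dvd.
have /dvdnP [q Qq] := g_dvd _ LQ; rewrite Qq in LQg.
(* Both [Q = q * g] and [Q + g] lie in [L], and for [t >= q * q] the coefficients below
   are nonnegative. *)
exists (q * q)%N => t le_t.
case: (posnP q) => [q0 | q_gt0]; first by move: LQg; rewrite q0 mul0n add0n; apply: LM.
have t_q : (q <= t %/ q)%N by rewrite leq_divRL.
have -> : (t * g = (t %/ q - t %% q) * (q * g) + t %% q * (q * g + g))%N.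
  by have := divn_eq t q; have := ltn_pmod t q_gt0; nia.
by apply: LD; apply: LM => //; rewrite -Qq.
Qed.

Lemma full_family_tail (F : (nat -> Prop) -> Prop) (A : nat -> Prop) N :
  furstenberg F -> full_family F -> (forall i, (N <= i)%N -> A i) -> F A.
Proof.
move=> [[A0 FA0] [_ F_up]] F_full A_tail.
apply: (F_up _ _ (F_full (fun _ => True) N (F_up _ _ FA0 (fun _ _ => I)))).
by move=> i [_ /A_tail].
Qed.

Lemma homo_ltn_geq_id (phi : nat -> nat) : {homo phi : m n / (m < n)%N} -> forall k, (k <= phi k)%N.
Proof. by move=> phi_incr; elim=> // k IH; apply: leq_ltn_trans IH (phi_incr _ _ (ltnSn k)). Qed.

Section Dynamics.
Variables (X : Type) (d : X -> X -> R) (f : X -> X).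
Hypothesis d_metric : is_metric d.

Lemma dist_ge0 x y : 0 <= d x y.
Proof. by case: d_metric. Qed.

Lemma dist_xx x : d x x = 0.
Proof. by case: d_metric => _ [/(_ x x) [_ ->]]. Qed.

Lemma dist_sym x y : d x y = d y x.
Proof. by case: d_metric => _ [_ []]. Qed.

Lemma dist_triangle x y z : d x z <= d x y + d y z.
Proof. by case: d_metric => _ [_ [_]]. Qed.

Lemma dist_triangle4 x y x' y' : d x y <= d x x' + d x' y' + d y' y.
Proof. by have := dist_triangle x x' y; have := dist_triangle x' y' y; lra. Qed.

Definition converges (u : nat -> X) p :=
  forall e, 0 < e -> exists N, forall k, (N <= k)%N -> d (u k) p < e.

Definition cluster_point (u : nat -> X) p :=
  forall e, 0 < e -> forall N, exists k, (N <= k)%N /\ d (u k) p < e.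

Lemma open_n_bigcap n (A : nat -> ('I_n -> X) -> Prop) N :
  (forall k, open_n d (A k)) -> open_n d (fun z => forall k, (k <= N)%N -> A k z).
Proof.
move=> A_open z Az.
have ball k : exists e, 0 < e /\
    ((k <= N)%N -> forall w, (forall j, d (z j) (w j) < e) -> A k w).
  case: (leqP k N) => [le_kN | lt_Nk]; last by exists 1; split=> [|le_kN]; [lra | exfalso; lia].
  by have [e [e_gt0 e_ball]] := A_open k z (Az k le_kN); exists e.
have [e e_spec] := choice _ ball.
have [e0 [e0_gt0 e0_le]] := finite_lower_bound_gt0 (fun k : 'I_N.+1 => proj1 (e_spec k)).
exists e0; split=> // w w_near k le_kN.
apply: (proj2 (e_spec k) le_kN) => j; apply: Rlt_le_trans (w_near j) _.
exact: (e0_le (Ordinal (le_kN : (k < N.+1)%N))).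
Qed.

Lemma open_pairwise_far n r :
  open_n d (fun z : 'I_n -> X => forall j k : 'I_n, (j < k)%N -> r < d (z j) (z k)).
Proof.
move=> z z_far.
pose g (t : 'I_n * 'I_n) := if (t.1 < t.2)%N then (d (z t.1) (z t.2) - r) / 2 else 1.
have g_gt0 t : 0 < g t by rewrite /g; case: ifP => [/z_far|_]; lra.
have [e [e_gt0 e_le]] := finite_lower_bound_gt0 g_gt0.
exists e; split=> // w w_near j k lt_jk.
have := e_le (j, k); rewrite /g /= lt_jk.
have := w_near j; have := w_near k; have := dist_triangle4 (z j) (z k) (w j) (w k).
rewrite (dist_sym (w k)); lra.
Qed.

Lemma open_pairwise_close n r :
  open_n d (fun z : 'I_n -> X => forall j k : 'I_n, (j < k)%N -> d (z j) (z k) < r).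
Proof.
move=> z z_close.
pose g (t : 'I_n * 'I_n) := if (t.1 < t.2)%N then (r - d (z t.1) (z t.2)) / 2 else 1.
have g_gt0 t : 0 < g t by rewrite /g; case: ifP => [/z_close|_]; lra.
have [e [e_gt0 e_le]] := finite_lower_bound_gt0 g_gt0.
exists e; split=> // w w_near j k lt_jk.
have := e_le (j, k); rewrite /g /= lt_jk.
have := w_near j; have := w_near k; have := dist_triangle4 (w j) (w k) (z j) (z k).
rewrite (dist_sym (w j) (z j)); lra.
Qed.

Lemma Gdelta_bigcap n (S : nat -> ('I_n -> X) -> Prop) :
  (forall p, Gdelta_n d (S p)) -> Gdelta_n d (fun z => forall p, S p z).
Proof.
move=> /choice [V V_spec].
exists (fun N z => forall p, (p <= N)%N -> forall k, (k <= N)%N -> V p k z); split.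
  move=> N; apply: (open_n_bigcap (A := fun p z => forall k, (k <= N)%N -> V p k z)) => p.
  by apply: open_n_bigcap; case: (V_spec p).
move=> z; split=> [Sz N p _ k _ | Vz p]; case: (V_spec p) => _ /(_ z) [Sz_V V_Sz].
  exact: Sz_V.
by apply: V_Sz => k; apply: (Vz (maxn p k)); [apply: leq_maxl | apply: leq_maxr].
Qed.

Lemma residual_of_dense_Gdelta n (Y : X -> Prop) (S : ('I_n -> X) -> Prop) :
  Gdelta_n d S -> dense_in d Y (fun z => in_pow Y z /\ S z) ->
  residual d Y (fun z => in_pow Y z /\ S z).
Proof.
move=> [V [V_open S_V]] S_dense.
exists (fun k z => in_pow Y z /\ V k z); split=> [k | z YVz]; last first.
  by split; [case: (YVz 0%N) | apply/S_V => k; case: (YVz k)].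
split.
- split=> [z [] // | z [Yz /V_open [e [e_gt0 e_ball]]]].
  by exists e; split=> // w Yw w_near; split; last exact: e_ball.
- move=> z Yz e e_gt0; have [w [[Yw /S_V Vw] w_near]] := S_dense z Yz e e_gt0.
  by exists w.
Qed.

Lemma residual_and n (Y : X -> Prop) (P Q : ('I_n -> X) -> Prop) :
  residual d Y P -> residual d Y Q -> residual d Y (fun z => P z /\ Q z).
Proof.
move=> [U [U_od UP]] [V [V_od VQ]].
exists (fun k => if odd k then U k./2 else V k./2); split=> [k | z UVz].
  by case: (odd k).
split; [apply: UP => k | apply: VQ => k].
- by have := UVz k.*2.+1; rewrite /= odd_double uphalf_double.
- by have := UVz k.*2; rewrite odd_double doubleK.
Qed.

Hypothesis d_compact : mcompact d.

Lemma cluster_point_exists u : exists p, cluster_point u p.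
Proof.
apply: NNPP => no_cluster.
have isolated p : exists e N, 0 < e /\ forall k, (N <= k)%N -> e <= d (u k) p.
  apply: NNPP => H; apply: no_cluster; exists p => e e_gt0 N.
  apply: NNPP => H'; apply: H; exists e, N; split=> // k le_Nk.
  by apply: Rnot_lt_le => lt; apply: H'; exists k.
pose I := {t : X * R * nat | 0 < t.1.2 /\ forall k, (t.2 <= k)%N -> t.1.2 <= d (u k) t.1.1}.
pose ball (t : I) y := d (sval t).1.1 y < (sval t).1.2.
have ball_open t : mopen d (ball t).
  move=> y; rewrite /ball => lt; exists ((sval t).1.2 - d (sval t).1.1 y); split; first lra.
  by move=> z; have := dist_triangle (sval t).1.1 y z; lra.
have ball_cover y : exists t, ball t y.
  have [e [N [e_gt0 far]]] := isolated y.
  by exists (exist _ (y, e, N) (conj e_gt0 far)); rewrite /ball /= dist_xx.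
have [s s_cover] := d_compact ball_open ball_cover.
pose N := foldr (fun t m => maxn (sval t).2 m) 0%N s.
have [t [t_s u_N]] := s_cover (u N).
have le_N : ((sval t).2 <= N)%N.
  rewrite /N; elim: s t_s {s_cover N u_N} => [|t' s IH] //= [-> | /IH]; first exact: leq_maxl.
  by move/leq_trans; apply; apply: leq_maxr.
by move: u_N; rewrite /ball dist_sym; case: t le_N {t_s} => [[[p e] M] [_ far]] /far /= ? ?; lra.
Qed.

Lemma exists_close_terms u e K : 0 < e -> exists T1 T2, (T1 + K <= T2)%N /\ d (u T1) (u T2) < e.
Proof.
move=> e_gt0; have [p p_cluster] := cluster_point_exists u.
have [T1 [_ T1_p]] := p_cluster (e / 2) ltac:(lra) 0%N.
have [T2 [T2_ge T2_p]] := p_cluster (e / 2) ltac:(lra) (T1 + K)%N.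
by exists T1, T2; split=> //; have := dist_triangle (u T1) p (u T2); rewrite (dist_sym p); lra.
Qed.

Lemma converges_subseq u p (phi : nat -> nat) :
  {homo phi : m n / (m < n)%N} -> converges u p -> converges (fun k => u (phi k)) p.
Proof.
move=> phi_incr u_p e e_gt0; have [N N_u] := u_p e e_gt0.
by exists N => k le_Nk; apply: N_u; apply: leq_trans le_Nk (homo_ltn_geq_id phi_incr k).
Qed.

Lemma converging_subseq u :
  exists phi, {homo phi : m n / (m < n)%N} /\ exists p, converges (fun k => u (phi k)) p.
Proof.
have [p p_cluster] := cluster_point_exists u.
have next (mk : nat * nat) : exists i, (mk.1 <= i)%N /\ d (u i) p < / INR mk.2.+1.
  exact: p_cluster _ (inv_succ_gt0 _) _.
have [g g_next] := choice _ next.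
pose phi := fix phi k := if k is k'.+1 then g ((phi k').+1, k) else g (0%N, 0%N).
exists phi; split.
  apply: homo_ltn => [y x z | k]; first exact: ltn_trans.
  by case: (g_next ((phi k).+1, k.+1)).
exists p => e e_gt0; have [N N_small] := inv_succ_small e_gt0.
exists N => k le_Nk; apply: Rlt_trans (N_small k le_Nk).
by case: k {le_Nk} => [|k]; [case: (g_next (0%N, 0%N)) | case: (g_next ((phi k).+1, k.+1))].
Qed.

Lemma converging_subseq_finite (I : eqType) (u : nat -> I -> X) (s : seq I) :
  exists phi, {homo phi : m n / (m < n)%N} /\
    forall j, j \in s -> exists p, converges (fun k => u (phi k) j) p.
Proof.
elim: s => [|j s [phi [phi_incr IH]]]; first by exists id; split=> [m n // | ?]; rewrite in_nil.
have [psi [psi_incr [p p_lim]]] := converging_subseq (fun k => u (phi k) j).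
exists (phi \o psi); split=> [m n lt_mn | j']; first by apply/phi_incr/psi_incr.
rewrite in_cons => /orP [/eqP -> | /IH [p' p'_lim]]; first by exists p.
by exists p'; apply: (converges_subseq (u := fun k => u (phi k) j') psi_incr).
Qed.

Hypothesis f_cont : mcontinuous d f.

Lemma unif_continuous e : 0 < e -> exists h, 0 < h /\ forall x y, d x y < h -> d (f x) (f y) < e.
Proof.
move=> e_gt0; apply: NNPP => not_unif.
have bad k : exists xy : X * X, d xy.1 xy.2 < / INR k.+1 /\ e <= d (f xy.1) (f xy.2).
  apply: NNPP => H; apply: not_unif; exists (/ INR k.+1); split; first exact: inv_succ_gt0.
  by move=> x y xy_close; apply: Rnot_le_lt => far; apply: H; exists (x, y).
have [g g_bad] := choice _ bad.
have [q q_cluster] := cluster_point_exists (fun k => (g k).1).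
have [h [h_gt0 q_cont]] := f_cont q (ltac:(lra) : 0 < e / 2).
have [N N_small] := inv_succ_small (ltac:(lra) : 0 < h / 2).
have [k [le_Nk gk_q]] := q_cluster (h / 2) ltac:(lra) N.
have [gk_close gk_far] := g_bad k.
have k_small := N_small k le_Nk.
have q_g1 : d q (g k).1 < h by rewrite dist_sym; lra.
have q_g2 : d q (g k).2 < h.
  by have := dist_triangle q (g k).1 (g k).2; rewrite (dist_sym q (g k).1); lra.
have := q_cont _ q_g1; have := q_cont _ q_g2.
by have := dist_triangle (f (g k).1) (f q) (f (g k).2); rewrite (dist_sym (f (g k).1) (f q)); lra.
Qed.

Lemma iter_continuous k x e : 0 < e ->
  exists h, 0 < h /\ forall y, d x y < h -> d (iter k f x) (iter k f y) < e.
Proof.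
elim: k e => [|k IH] e e_gt0; first by exists e.
have [h1 [h1_gt0 fk_cont]] := f_cont (iter k f x) e_gt0.
have [h [h_gt0 iter_cont]] := IH _ h1_gt0.
by exists h; split=> // y /iter_cont /fk_cont.
Qed.

Lemma iter_dist_limit_ge (u v : nat -> X) p q eta i :
  converges u p -> converges v q ->
  (forall k, eta <= d (iter i f (u k)) (iter i f (v k))) -> eta <= d (iter i f p) (iter i f q).
Proof.
move=> u_p v_q far; apply: Rnot_lt_le => lt.
pose e := (eta - d (iter i f p) (iter i f q)) / 2.
have e_gt0 : 0 < e by rewrite /e; lra.
have [hp [hp_gt0 p_cont]] := iter_continuous i p e_gt0.
have [hq [hq_gt0 q_cont]] := iter_continuous i q e_gt0.
have [Np Np_u] := u_p hp hp_gt0; have [Nq Nq_v] := v_q hq hq_gt0.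
set k := maxn Np Nq.
have u_near : d p (u k) < hp by rewrite dist_sym; apply/Np_u/leq_maxl.
have v_near : d q (v k) < hq by rewrite dist_sym; apply/Nq_v/leq_maxr.
have := p_cont _ u_near; have := q_cont _ v_near; have := far k.
have := dist_triangle4 (iter i f (u k)) (iter i f (v k)) (iter i f p) (iter i f q).
by rewrite (dist_sym (iter i f (u k)) (iter i f p)) /e; lra.
Qed.

Definition asymptotic x y :=
  forall e, 0 < e -> exists N, forall i, (N <= i)%N -> d (iter i f x) (iter i f y) < e.

Lemma asymptotic_refl x : asymptotic x x.
Proof. by move=> e e_gt0; exists 0%N => i _; rewrite dist_xx. Qed.

Lemma asymptotic_uniform n (w b : 'I_n -> X) :
  (forall j, asymptotic (w j) (b j)) -> forall e, 0 < e ->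
  exists N, forall i, (N <= i)%N -> forall j, d (iter i f (w j)) (iter i f (b j)) < e.
Proof.
move=> w_b e e_gt0; have [N N_spec] := choice _ (fun j => w_b j e e_gt0).
by exists (\max_j N j)%N => i le_i j; apply: N_spec; apply: leq_trans le_i; apply: leq_bigmax.
Qed.

(** * Chains *)

Local Notation chain := (chain d f).
Local Notation chain_to := (chain_to d f).
Local Notation CR := (CR d f).

Definition chain_seq (P : X -> Prop) del (xs : nat -> X) k :=
  (forall i, (i <= k)%N -> P (xs i)) /\ (forall i, (i < k)%N -> d (f (xs i)) (xs i.+1) <= del).

Lemma chain_weaken (P Q : X -> Prop) del del' x y k :
  del <= del' -> (forall z, P z -> Q z) -> chain P del x y k -> chain Q del' x y k.
Proof.
move=> le_del PQ [xs [k_gt0 [xs0 [xsk [xsP xs_jump]]]]].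
exists xs; do 3!split=> //.
by split=> i lt_i; [apply/PQ/xsP | apply: Rle_trans (xs_jump i lt_i) le_del].
Qed.

Lemma chain_cat P del x y z k l :
  chain P del x y k -> chain P del y z l -> chain P del x z (k + l).
Proof.
move=> [xs [k_gt0 [xs0 [xsk [xsP xs_jump]]]]] [ys [l_gt0 [ys0 [ysl [ysP ys_jump]]]]].
exists (fun i => if (i <= k)%N then xs i else ys (i - k)%N); split; first lia.
split; first by rewrite leq0n.
split; first by rewrite ifN ?addKn //; lia.
split=> i le_i; first by case: ifP => [/xsP | _] //; apply: ysP; lia.
case: (ltngtP i k) => [lt_ik | lt_ki | ->].
- exact: xs_jump.
- by rewrite subSn; [apply: ys_jump | ]; lia.
- by rewrite xsk -ys0 subSnn; apply: ys_jump.
Qed.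

Lemma chain_iter P del x s : (forall z, P z -> P (f z)) -> P x -> 0 <= del -> (0 < s)%N ->
  chain P del x (iter s f x) s.
Proof.
move=> P_inv Px del_ge0 s_gt0; exists (fun i => iter i f x); do 3!split=> //.
by split=> i _; [elim: i => //= i; apply: P_inv | rewrite iterS dist_xx].
Qed.

Lemma chain_cat_iter P del x y k s : (forall z, P z -> P (f z)) -> 0 <= del ->
  chain P del x y k -> chain P del x (iter s f y) (k + s).
Proof.
move=> P_inv del_ge0 xy; case: s => [|s]; first by rewrite addn0.
have Py : P y by case: xy => xs [_ [_ [<- [xsP _]]]]; apply: xsP.
exact: chain_cat xy (chain_iter P_inv Py del_ge0 (ltn0Sn s)).
Qed.

Lemma chain_move_last P del x y y' k : P y' -> chain P del x y k -> chain P (del + d y y') x y' k.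
Proof.
move=> Py' [xs [k_gt0 [xs0 [xsk [xsP xs_jump]]]]].
exists (fun i => if i == k then y' else xs i); split=> //.
split; first by rewrite ifN //; lia.
split; first by rewrite eqxx.
split=> i le_i; first by case: eqP => // _; apply: xsP.
rewrite ifN; last lia.
have := xs_jump i le_i; have := dist_ge0 y y'.
by case: eqP => [-> | _]; [rewrite xsk; have := dist_triangle (f (xs i)) y y' |]; lra.
Qed.

Lemma chain_move_first P del x x' y k :
  P x' -> chain P del x y k -> chain P (del + d (f x') (f x)) x' y k.
Proof.
move=> Px' [xs [k_gt0 [xs0 [xsk [xsP xs_jump]]]]].
exists (fun i => if i == 0%N then x' else xs i); do 2!split=> //.
split; first by rewrite ifN //; lia.
split=> i le_i; first by case: eqP => // _; apply: xsP.
have := xs_jump i le_i; have := dist_ge0 (f x') (f x).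
by case: eqP => [-> | _] /=; [rewrite xs0; have := dist_triangle (f x') (f x) (xs 1%N) |]; lra.
Qed.

Lemma chain_seq_prefix P del xs k i :
  chain_seq P del xs k -> (0 < i <= k)%N -> chain P del (xs 0%N) (xs i) i.
Proof.
move=> [xsP xs_jump] /andP [i_gt0 le_ik]; exists xs; do 3!split=> //.
by split=> j le_j; [apply: xsP | apply: xs_jump]; lia.
Qed.

Lemma chain_seq_suffix P del xs k i :
  chain_seq P del xs k -> (i < k)%N -> chain P del (xs i) (xs k) (k - i).
Proof.
move=> [xsP xs_jump] lt_ik; exists (fun j => xs (i + j)%N); split; first lia.
rewrite addn0 subnKC; last exact: ltnW.
do 2!split=> //.
by split=> j le_j; [apply: xsP | rewrite addnS; apply: xs_jump]; lia.
Qed.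

Lemma chain_behead P del x y k :
  chain P del x y k -> (1 < k)%N -> exists s, d (f x) s <= del /\ chain P del s y k.-1.
Proof.
move=> [xs [k_gt0 [xs0 [xsk xs_seq]]]] lt_1k; exists (xs 1%N); split.
  by rewrite -xs0; apply: (proj2 xs_seq); lia.
by rewrite -xsk -subn1; apply: chain_seq_suffix xs_seq _; lia.
Qed.

Lemma chain_to_trans x y z : chain_to x y -> chain_to y z -> chain_to x z.
Proof.
move=> xy yz del del_gt0; have [k xy_k] := xy del del_gt0; have [l yz_l] := yz del del_gt0.
by exists (k + l)%N; apply: chain_cat xy_k yz_l.
Qed.

Lemma chain_to_step y : chain_to y (f y).
Proof.
move=> del del_gt0; exists 1%N.
by apply: (chain_iter (s := 1%N) (fun _ _ => I)) => //; lra.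
Qed.

(* Run through a cycle at [y] before going to [z], then replace the first point by [f y]:
   continuity of [f] at [f y] bounds the new first jump. *)
Lemma chain_to_image y z : CR y -> chain_to y z -> chain_to (f y) z.
Proof.
move=> yy yz del del_gt0.
have [h [h_gt0 fy_cont]] := f_cont (f y) (ltac:(lra) : 0 < del / 2).
have [del' [del'_gt0 [del'_del del'_h]]] :=
  exists_pos_below (ltac:(lra) : 0 < del / 2) (ltac:(lra) : 0 < h / 2).
have [k yy_k] := yy del' del'_gt0; have [l yz_l] := yz del' del'_gt0.
have [|s [fy_s sz]] := chain_behead (chain_cat yy_k yz_l).
  by case: yy_k => ? [? _]; case: yz_l => ? [? _]; lia.
exists (k + l).-1; apply: (chain_weaken _ (fun _ _ => I) (chain_move_first (x' := f y) I sz)).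
by have := fy_cont s ltac:(lra); lra.
Qed.

Lemma chain_to_of_approx_right x q :
  (forall del e, 0 < del -> 0 < e ->
    exists p k, chain (fun _ => True) del x p k /\ d p q < e) -> chain_to x q.
Proof.
move=> approx del del_gt0; have [p [k [xp pq]]] := approx (del / 2) (del / 2) ltac:(lra) ltac:(lra).
by exists k; apply: (chain_weaken _ (fun _ _ => I) (chain_move_last (y' := q) I xp)); lra.
Qed.

Lemma chain_to_of_approx_left q y :
  (forall del e, 0 < del -> 0 < e ->
    exists p k, chain (fun _ => True) del p y k /\ d q p < e) -> chain_to q y.
Proof.
move=> approx del del_gt0; have [h [h_gt0 q_cont]] := f_cont q (ltac:(lra) : 0 < del / 2).
have [p [k [py qp]]] := approx (del / 2) h ltac:(lra) h_gt0.
exists k; apply: (chain_weaken _ (fun _ _ => I) (chain_move_first (x' := q) I py)).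
by have := q_cont _ qp; lra.
Qed.

Lemma S_set_of_asymptotic F n (w b : 'I_n -> X) eta r :
  furstenberg F -> full_family F -> (forall j, asymptotic (w j) (b j)) ->
  (forall i (j k : 'I_n), (j < k)%N -> eta <= d (iter i f (b j)) (iter i f (b k))) ->
  r < eta -> F (S_set d f w r).
Proof.
move=> F_fam F_full wb b_distal lt_r.
have [N N_close] := asymptotic_uniform wb (ltac:(lra) : 0 < (eta - r) / 2).
apply: (full_family_tail (N := N)) => // i le_i j k lt_jk.
have := N_close i le_i j; have := N_close i le_i k; have := b_distal i j k lt_jk.
have := dist_triangle4 (iter i f (b j)) (iter i f (b k)) (iter i f (w j)) (iter i f (w k)).
by rewrite (dist_sym (iter i f (b j)) (iter i f (w j))); lra.
Qed.

Lemma T_set_of_asymptotic G n (w : 'I_n -> X) b e :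
  furstenberg G -> full_family G -> (forall j, asymptotic (w j) b) -> 0 < e -> G (T_set d f w e).
Proof.
move=> G_fam G_full wb e_gt0.
have [N N_close] := asymptotic_uniform (b := fun _ => b) wb (ltac:(lra) : 0 < e / 2).
apply: (full_family_tail (N := N)) => // i le_i j k _.
have := N_close i le_i j; have := N_close i le_i k.
have := dist_triangle (iter i f (w j)) (iter i f b) (iter i f (w k)).
by rewrite (dist_sym (iter i f b) (iter i f (w k))); lra.
Qed.

(** * Chain components, their periods and classes *)

Section Component.
Variable C : X -> Prop.
Hypothesis C_component : chain_component d f C.

Local Notation period := (period d f C).
Local Notation simCd := (simCd d f C).
Local Notation Dclass := (Dclass d f C).
Local Notation Ddelta := (Ddelta d f C).
Local Notation Vs := (Vs d f C).

Lemma component_CR x : C x -> CR x.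
Proof. by case: C_component => x0 [_ C_iff] /C_iff []. Qed.

Lemma component_chain_to x y : C x -> C y -> chain_to x y.
Proof.
case: C_component => x0 [_ C_iff] /C_iff [_ [_ x_x0]] /C_iff [_ [x0_y _]].
exact: chain_to_trans x_x0 x0_y.
Qed.

Lemma component_of_chain_to x y : C x -> chain_to x y -> chain_to y x -> C y.
Proof.
case: C_component => x0 [_ C_iff] /C_iff [_ [x0_x x_x0]] xy yx.
apply/C_iff; split; first exact: chain_to_trans yx xy.
by split; [apply: chain_to_trans x0_x xy | apply: chain_to_trans yx x_x0].
Qed.

Lemma component_f y : C y -> C (f y).
Proof.
move=> Cy; apply: (component_of_chain_to Cy (chain_to_step y)).
exact: chain_to_image (component_CR Cy) (component_CR Cy).
Qed.

Lemma component_iter k y : C y -> C (iter k f y).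
Proof. by move=> Cy; elim: k => //= k; apply: component_f. Qed.

Lemma component_closed p : (forall e, 0 < e -> exists y, C y /\ d y p < e) -> C p.
Proof.
move=> p_adh; have [x [Cx _]] := p_adh 1 Rlt_0_1.
apply: (component_of_chain_to Cx).
- apply: chain_to_of_approx_right => del e del_gt0 e_gt0.
  have [y [Cy yp]] := p_adh e e_gt0; have [k xy] := component_chain_to Cx Cy del_gt0.
  by exists y, k.
- apply: chain_to_of_approx_left => del e del_gt0 e_gt0.
  have [y [Cy yp]] := p_adh e e_gt0; have [k yx] := component_chain_to Cy Cx del_gt0.
  by exists y, k; rewrite dist_sym.
Qed.

(* Compactness: otherwise the far points of finer and finer chains from [x] to [y] would
   accumulate at a point chain equivalent to [x], i.e. at a point of [C]. *)
Lemma component_chains_stay_near x y eta : C x -> C y -> 0 < eta ->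
  exists eps, 0 < eps /\ forall p,
    (exists i, chain (fun _ => True) eps x p i) -> (exists j, chain (fun _ => True) eps p y j) ->
    exists c, C c /\ d p c < eta.
Proof.
move=> Cx Cy eta_gt0; apply: NNPP => no_eps.
have far k : exists p, ((exists i, chain (fun _ => True) (/ INR k.+1) x p i) /\
    (exists j, chain (fun _ => True) (/ INR k.+1) p y j)) /\ forall c, C c -> eta <= d p c.
  apply: NNPP => no_p; apply: no_eps; exists (/ INR k.+1).
  split=> [|p xp py]; first exact: inv_succ_gt0.
  apply: NNPP => p_far; apply: no_p; exists p; split=> // c Cc.
  by apply: Rnot_lt_le => pc; apply: p_far; exists c.
have [p p_far] := choice _ far.
have [q q_cluster] := cluster_point_exists p.
have p_near_q del e : 0 < del -> 0 < e -> exists k, / INR k.+1 <= del /\ d (p k) q < e.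
  move=> del_gt0 e_gt0; have [N N_small] := inv_succ_small del_gt0.
  have [k [le_Nk pk_q]] := q_cluster e e_gt0 N.
  by exists k; split=> //; apply/Rlt_le/N_small.
have Cq : C q.
  apply: (component_of_chain_to Cx).
    apply: chain_to_of_approx_right => del e del_gt0 e_gt0.
    have [k [k_small pk_q]] := p_near_q del e del_gt0 e_gt0.
    have [[[i xp] _] _] := p_far k.
    by exists (p k), i; split=> //; apply: (chain_weaken k_small (fun _ _ => I) xp).
  apply: (chain_to_trans (y := y)); last exact: component_chain_to.
  apply: chain_to_of_approx_left => del e del_gt0 e_gt0.
  have [k [k_small pk_q]] := p_near_q del e del_gt0 e_gt0.
  have [[_ [j py]] _] := p_far k.
  by exists (p k), j; rewrite dist_sym; split=> //; apply: (chain_weaken k_small (fun _ _ => I) py).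
have [k [_ pk_q]] := p_near_q 1 eta Rlt_0_1 eta_gt0.
by have [_ /(_ q Cq)] := p_far k; lra.
Qed.

(* A fine chain from [x] to [y] stays close to [C]; moving each of its points to a nearby
   point of [C] costs little, by uniform continuity. *)
Lemma chain_in_component x y del : C x -> C y -> 0 < del -> exists k, chain C del x y k.
Proof.
move=> Cx Cy del_gt0.
have [h [h_gt0 f_unif]] := unif_continuous (ltac:(lra) : 0 < del / 3).
have [eta [eta_gt0 [eta_h eta_del]]] := exists_pos_below h_gt0 (ltac:(lra) : 0 < del / 3).
have [eps [eps_gt0 near_C]] := component_chains_stay_near Cx Cy eta_gt0.
have [eps' [eps'_gt0 [eps'_eps eps'_del]]] := exists_pos_below eps_gt0 (ltac:(lra) : 0 < del / 3).
have [K [xs [K_gt0 [xs0 [xsK xs_seq]]]]] := component_chain_to Cx Cy eps'_gt0.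
have {}xs_seq : chain_seq (fun _ => True) eps' xs K := xs_seq.
have near_xs i : exists c, C c /\ (i = 0%N -> c = x) /\ (i = K -> c = y) /\
    ((i <= K)%N -> d (xs i) c < eta).
  case: (posnP i) => [-> | i_gt0]; first by exists x; rewrite xs0 dist_xx; do 3!split=> //; lia.
  case: (ltnP i K) => [lt_iK | le_Ki].
    have xp : chain (fun _ => True) eps x (xs i) i.
      rewrite -xs0; apply: (chain_weaken eps'_eps (fun _ _ => I) (chain_seq_prefix xs_seq _)).
      by rewrite i_gt0 ltnW.
    have py : chain (fun _ => True) eps (xs i) y (K - i).
      rewrite -xsK.
      exact: (chain_weaken eps'_eps (fun _ _ => I) (chain_seq_suffix xs_seq lt_iK)).
    have [c [Cc pc]] := near_C (xs i) (ex_intro _ _ xp) (ex_intro _ _ py).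
    by exists c; split=> //; split=> [i0 | ]; [exfalso; lia | split=> // iK; exfalso; lia].
  exists y; split=> //; split=> [i0 | ]; first by exfalso; lia.
  split=> // le_iK; have -> : i = K by lia.
  by rewrite xsK dist_xx.
have [c c_spec] := choice _ near_xs.
exists K, c; split=> //; split; first by case: (c_spec 0%N) => _ [->].
split; first by case: (c_spec K) => _ [_ [->]].
split=> i le_i; first by case: (c_spec i).
have [_ xs_jump] := xs_seq.
have [_ [_ [_ xs_c]]] := c_spec i; have [_ [_ [_ xs_c']]] := c_spec i.+1.
have ci_xs : d (c i) (xs i) < h by rewrite dist_sym; have := xs_c (ltnW le_i); lra.
have := f_unif _ _ ci_xs; have := xs_jump i le_i; have := xs_c' le_i.
by have := dist_triangle4 (f (c i)) (c i.+1) (f (xs i)) (xs i.+1); lra.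
Qed.

Lemma period_unique del m m' : period del m -> period del m' -> m = m'.
Proof. by move=> [m_dvd m_max] [m'_dvd m'_max]; apply/eqP; rewrite eqn_dvd m_max ?m'_max. Qed.

Lemma period_dvdn del del' m m' : del' <= del -> period del m -> period del' m' -> (m %| m')%N.
Proof.
move=> le_del [m_dvd _] [_ m'_max]; apply: m'_max => k [y [Cy yy]].
by apply: m_dvd; exists y; split=> //; apply: (chain_weaken le_del (fun _ => id) yy).
Qed.

Lemma period_dvd_cycle del m u k : period del m -> C u -> chain C del u u k -> (m %| k)%N.
Proof. by move=> [m_dvd _] Cu uu; apply: m_dvd; exists u. Qed.

(* The lengths of the [del]-cycles through [u] form an additive monoid whose gcd is the
   period, since every cycle of [C] can be spliced into one through [u]. *)
Lemma period_exists u del : C u -> 0 < del ->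
  exists m, (0 < m)%N /\ period del m /\
    exists t0, forall t, (t0 <= t)%N -> chain C del u u (t * m).
Proof.
move=> Cu del_gt0.
pose L k := k = 0%N \/ chain C del u u k.
have L_add a b : L a -> L b -> L (a + b)%N.
  case=> [-> | ua] [-> | ub]; rewrite ?addn0 ?add0n; [by left | by right | by right |].
  by right; apply: chain_cat ua ub.
have [k0 uu] := chain_in_component Cu Cu del_gt0.
have k0_gt0 : (0 < k0)%N by case: uu => ? [].
have [g [g_gt0 [[g_dvd g_max] [t0 t0_L]]]] :=
  additive_submonoid_gcd (or_introl erefl) L_add (ex_intro _ k0 (conj k0_gt0 (or_intror uu))).
exists g; split=> //; split.
  split=> [k [y [Cy yy]] | g' g'_dvd].
  - have [a uy] := chain_in_component Cu Cy del_gt0.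
    have [b yu] := chain_in_component Cy Cu del_gt0.
    have g_ab : (g %| a + b)%N by apply/g_dvd; right; apply: chain_cat uy yu.
    have g_akb : (g %| a + b + k)%N.
      by rewrite addnAC; apply/g_dvd; right; apply: chain_cat (chain_cat uy yy) yu.
    by rewrite -(dvdn_addr k g_ab).
  - apply: g_max => k [-> | uu_k]; first exact: dvdn0.
    by apply: g'_dvd; exists u.
exists t0.+1 => t le_t; case: (t0_L t (ltnW le_t)) => // tg0; exfalso; nia.
Qed.

Lemma period_dvd_sub del m x y k k' : 0 < del -> period del m -> C x -> C y ->
  chain C del x y k -> chain C del x y k' -> (k <= k')%N -> (m %| k' - k)%N.
Proof.
move=> del_gt0 per Cx Cy xy xy' le_kk'.
have [l yx] := chain_in_component Cy Cx del_gt0.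
have m_kl := period_dvd_cycle per Cx (chain_cat xy yx).
have m_k'l := period_dvd_cycle per Cx (chain_cat xy' yx).
by rewrite -(dvdn_addr _ m_kl) addnAC subnKC.
Qed.

Lemma simCd_refl del x : 0 < del -> C x -> simCd del x x.
Proof.
move=> del_gt0 Cx; have [m [_ [per _]]] := period_exists Cx del_gt0.
have [k xx] := chain_in_component Cx Cx del_gt0.
by do 2!split=> //; exists m; split=> //; exists k; split=> //; apply: period_dvd_cycle per Cx xx.
Qed.

Lemma simCd_sym del x y : 0 < del -> simCd del x y -> simCd del y x.
Proof.
move=> del_gt0 [Cx [Cy [m [per [k [m_k xy]]]]]].
have [l yx] := chain_in_component Cy Cx del_gt0.
do 2!split=> //; exists m; split=> //; exists l; split=> //.
by rewrite -(dvdn_addr l m_k); apply: period_dvd_cycle per Cx (chain_cat xy yx).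
Qed.

Lemma simCd_trans del x y z : simCd del x y -> simCd del y z -> simCd del x z.
Proof.
move=> [Cx [_ [m [per [k [m_k xy]]]]]] [_ [Cz [m' [per' [l [m'_l yz]]]]]].
rewrite (period_unique per' per) in m'_l.
do 2!split=> //; exists m; split=> //; exists (k + l)%N.
by split; [apply: dvdn_add | apply: chain_cat xy yz].
Qed.

Lemma class_rep D : Dclass D -> exists x0, D x0 /\ forall y, D y <-> C y /\ simC d f C x0 y.
Proof.
move=> [x0 [Cx0 D_iff]]; exists x0; split=> //.
by apply/D_iff; split=> // del del_gt0; apply: simCd_refl.
Qed.

Lemma class_in_component D y : Dclass D -> D y -> C y.
Proof. by move=> [x0 [_ D_iff]] /D_iff []. Qed.

Lemma class_simCd D x y del : Dclass D -> D x -> D y -> 0 < del -> simCd del x y.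
Proof.
move=> [x0 [_ D_iff]] /D_iff [_ x0_x] /D_iff [_ x0_y] del_gt0.
exact: simCd_trans (simCd_sym del_gt0 (x0_x del del_gt0)) (x0_y del del_gt0).
Qed.

Lemma Ddelta_of_class D y del : Dclass D -> D y -> 0 < del -> Ddelta D del y.
Proof. by move=> D_cl Dy del_gt0; exists y; split=> //; apply: (class_simCd D_cl Dy Dy). Qed.

Lemma Ddelta_weaken D del del' y : 0 < del -> del <= del' -> Ddelta D del y -> Ddelta D del' y.
Proof.
move=> del_gt0 le_del [x [Dx [Cx [Cy [m [per [k [m_k xy]]]]]]]].
have [m' [_ [per' _]]] := period_exists Cx (Rlt_le_trans _ _ _ del_gt0 le_del).
exists x; do 3!split=> //; exists m'; split=> //; exists k; split.
  exact: dvdn_trans (period_dvdn le_del per' per) m_k.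
exact: (chain_weaken le_del (fun _ => id) xy).
Qed.

Lemma class_of_Ddelta D y : Dclass D -> (forall del, 0 < del -> Ddelta D del y) -> D y.
Proof.
move=> [x0 [_ D_iff]] y_D; apply/D_iff; split.
  by have [x [_ [_ [Cy _]]]] := y_D 1 Rlt_0_1.
move=> del del_gt0; have [x [/D_iff [_ x0_x] xy]] := y_D del del_gt0.
exact: simCd_trans (x0_x del del_gt0) xy.
Qed.

Lemma class_closed D p :
  Dclass D -> (forall e, 0 < e -> exists y, Ddelta D e y /\ d y p < e) -> D p.
Proof.
move=> D_cl p_adh; have Cp : C p.
  apply: component_closed => e e_gt0.
  by have [y [[x [_ [_ [Cy _]]]] yp]] := p_adh e e_gt0; exists y.
apply: (class_of_Ddelta (y := p) D_cl) => del del_gt0.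
have [y [[x [Dx [Cx [_ [m [per [k [m_k xy]]]]]]]] yp]] := p_adh (del / 2) ltac:(lra).
have [m' [_ [per' _]]] := period_exists Cx del_gt0.
exists x; do 3!split=> //; exists m'; split=> //; exists k; split.
  by apply: dvdn_trans m_k; apply: period_dvdn per' per; lra.
by apply: (chain_weaken _ (fun _ => id) (chain_move_last Cp xy)); lra.
Qed.

(* [s = l (m - 1)] is [-l] modulo the period [m], which cancels the length [l] of a chain
   from the representative of [E] to that of [D]. *)
Lemma Ddelta_shift D E del : Dclass D -> Dclass E -> 0 < del ->
  exists s, forall a, D a -> Ddelta E del (iter s f a).
Proof.
move=> D_cl E_cl del_gt0.
have [xD [DxD D_iff]] := class_rep D_cl; have [xE [ExE _]] := class_rep E_cl.
have CxE := class_in_component E_cl ExE.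
have [m [m_gt0 [per _]]] := period_exists CxE del_gt0.
have [l ED] := chain_in_component CxE (class_in_component D_cl DxD) del_gt0.
exists (l * m.-1)%N => a /D_iff [Ca /(_ del del_gt0) [_ [_ [m' [per' [k [m'_k Da]]]]]]].
rewrite (period_unique per' per) in m'_k.
exists xE; do 2!split=> //; split; first exact: component_iter.
exists m; split=> //; exists (k + l * m)%N; split; first by apply: dvdn_add => //; apply: dvdn_mull.
have -> : (k + l * m = l + k + l * m.-1)%N by rewrite -{1}(prednK m_gt0) mulnS; lia.
by apply: chain_cat_iter; [exact: component_f | lra | exact: chain_cat ED Da].
Qed.

Lemma distal_tuple_transfer D E n (a : 'I_n -> X) eta :
  Dclass D -> Dclass E -> (forall j, D (a j)) ->
  (forall i (j k : 'I_n), (j < k)%N -> eta <= d (iter i f (a j)) (iter i f (a k))) ->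
  exists b : 'I_n -> X, (forall j, E (b j)) /\
    forall i (j k : 'I_n), (j < k)%N -> eta <= d (iter i f (b j)) (iter i f (b k)).
Proof.
move=> D_cl E_cl Da a_distal.
have [s s_shift] := choice _ (fun k => Ddelta_shift D_cl E_cl (inv_succ_gt0 k)).
pose u k j := iter (s k) f (a j).
have [phi [phi_incr u_lim]] := converging_subseq_finite u (enum 'I_n).
have [b b_lim] := choice _ (fun j => u_lim j (mem_enum _ j)).
exists b; split=> [j | i j k lt_jk].
- apply: (class_closed E_cl) => e e_gt0.
  have [N N_small] := inv_succ_small e_gt0; have [M M_lim] := b_lim j e e_gt0.
  exists (u (phi (maxn N M)) j); split; last by apply/M_lim/leq_maxr.
  apply: (Ddelta_weaken (inv_succ_gt0 _) _ (s_shift _ _ (Da j))).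
  by apply/Rlt_le/N_small; apply: leq_trans (leq_maxl N M) (homo_ltn_geq_id phi_incr _).
- apply: (iter_dist_limit_ge (b_lim j) (b_lim k)) => l.
  by rewrite /u -!iterD; apply: a_distal.
Qed.

Lemma Vs_of_asymptotic E w b : Dclass E -> E b -> asymptotic w b -> Vs E w.
Proof.
move=> E_cl Eb wb del del_gt0; split=> e e_gt0; have [N N_wb] := wb e e_gt0; exists N => i le_i.
  exists (iter i f b); split; last exact: N_wb.
  exact/component_iter/(class_in_component E_cl).
by exists b; split; [apply: Ddelta_of_class | apply: N_wb].
Qed.

Lemma chain_from_Vs E z del m : Vs E z -> 0 < del -> period del m ->
  exists x k, E x /\ chain (fun _ => True) del z x k /\ (m %| k)%N.
Proof.
move=> z_Vs del_gt0 per.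
have [_ /(_ del del_gt0) [N N_near]] := z_Vs del del_gt0.
have [c [[x [Ex [Cx [Cc [m' [per' [k [m_k xc]]]]]]]] zc]] := N_near N.+1 (leqnSn N).
rewrite (period_unique per' per) in m_k.
have [l cx] := chain_in_component (component_iter N.+1 Cc) Cx del_gt0.
exists x, (N.+1 + l)%N; split=> //; split.
  apply: chain_cat (chain_weaken (Rle_refl _) (fun _ _ => I) cx).
  apply: (chain_weaken _ (fun _ _ => I)
    (chain_move_last (y' := iter N.+1 f c) I
      (chain_iter (x := z) (fun _ _ => I) I (Rle_refl 0) (ltn0Sn N)))).
  lra.
have := period_dvd_cycle per Cx
  (chain_cat (chain_cat_iter N.+1 component_f (Rlt_le _ _ del_gt0) xc) cx).
by rewrite -addnA dvdn_addr.
Qed.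

Lemma chain_to_orbit x b del m K : 0 < del -> simCd (del / 2) x b -> period del m ->
  exists T L, chain C del x (iter T f b) L /\ (L + K <= T)%N /\ (m %| T - L)%N.
Proof.
move=> del_gt0 [Cx [Cb [m2 [per2 [q [m2_q xb]]]]]] per.
have m_q : (m %| q)%N by apply: dvdn_trans m2_q; apply: period_dvdn per per2; lra.
have [T1 [T2 [le_T12 close]]] :=
  exists_close_terms (fun T => iter T f b) (q + K) (ltac:(lra) : 0 < del / 2).
have del2_ge0 : 0 <= del / 2 by lra.
have CT2 := component_iter T2 Cb.
have short : chain C del x (iter T2 f b) (q + T1).
  apply: (chain_weaken _ (fun _ => id)
    (chain_move_last CT2 (chain_cat_iter T1 component_f del2_ge0 xb))).
  by rewrite /= in close; lra.
have long : chain C del x (iter T2 f b) (q + T2).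
  by apply: (chain_weaken _ (fun _ => id) (chain_cat_iter T2 component_f del2_ge0 xb)); lra.
have le_lengths : (q + T1 <= q + T2)%N by lia.
have := period_dvd_sub del_gt0 per Cx CT2 short long le_lengths; rewrite subnDl => m_T12.
exists T2, (q + T1)%N; split=> //; split; first lia.
by rewrite addnC subnDA; apply: dvdn_sub.
Qed.

(** * Shadowing into stable sets *)

Hypothesis f_shadow : s_limit_shadowing d f.

Lemma shadow_chain_to_orbit eps : 0 < eps -> exists del, 0 < del /\
  forall z b T, chain (fun _ => True) del z (iter T f b) T ->
    exists w, d z w <= eps /\ asymptotic w b.
Proof.
move=> eps_gt0; have [del [del_gt0 shadow]] := f_shadow eps_gt0.
exists del; split=> // z b T [ys [T_gt0 [ys0 [ysT [_ ys_jump]]]]].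
pose xs i := if (i <= T)%N then ys i else iter i f b.
have xs_tail i : (T <= i)%N -> xs i = iter i f b.
  by move=> le_Ti; rewrite /xs; case: ifP => // le_iT; have -> : i = T by lia.
have xs_jump_tail i : (T <= i)%N -> d (f (xs i)) (xs i.+1) = 0.
  by move=> le_Ti; rewrite !xs_tail ?iterS ?dist_xx //; lia.
have xs_jump i : d (f (xs i)) (xs i.+1) <= del.
  case: (ltnP i T) => [lt_iT | le_Ti]; last by rewrite xs_jump_tail //; lra.
  by rewrite /xs ltnW // lt_iT; apply: ys_jump.
have xs_jump_lim e : 0 < e -> exists N, forall i, (N <= i)%N -> d (f (xs i)) (xs i.+1) < e.
  by move=> e_gt0; exists T => i le_Ti; rewrite xs_jump_tail.
have [w [w_eps w_asym]] := shadow xs xs_jump xs_jump_lim.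
exists w; split; first by have := w_eps 0%N; rewrite /xs /= ys0 dist_sym.
move=> e e_gt0; have [N N_w] := w_asym e e_gt0; exists (maxn N T) => i le_i.
by rewrite -xs_tail; [apply: N_w | ]; lia.
Qed.

Lemma Vs_asymptotic_dense E z b eps : Dclass E -> Vs E z -> E b -> 0 < eps ->
  exists w, d z w < eps /\ asymptotic w b.
Proof.
move=> E_cl z_Vs Eb eps_gt0.
have [del [del_gt0 shadow]] := shadow_chain_to_orbit (ltac:(lra) : 0 < eps / 2).
have [m [m_gt0 [per _]]] := period_exists (class_in_component E_cl Eb) del_gt0.
have [x [k [Ex [zx m_k]]]] := chain_from_Vs z_Vs del_gt0 per.
have [m' [_ [per' [t0 pad]]]] := period_exists (class_in_component E_cl Ex) del_gt0.
rewrite (period_unique per' per) in pad.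
have [T [L [xb [LK m_TL]]]] :=
  chain_to_orbit (k + t0 * m) del_gt0 (class_simCd E_cl Ex Eb (ltac:(lra) : 0 < del / 2)) per.
(* A cycle at [x] filling the gap, so that the chain from [z] reaches [iter T f b] at
   time [T]. *)
have xx : chain C del x x (T - L - k).
  have /dvdnP [t TLk] : (m %| T - L - k)%N by apply: dvdn_sub.
  by rewrite TLk; apply: pad; rewrite -(leq_pmul2r m_gt0) -TLk; nia.
have [w [zw wb]] : exists w, d z w <= eps / 2 /\ asymptotic w b.
  apply: (shadow z b T).
  have zb : chain (fun _ => True) del z (iter T f b) (k + (T - L - k + L)).
    apply: chain_cat zx (chain_cat _ _); apply: (chain_weaken (Rle_refl _) (fun _ _ => I)).
      exact: xx.
    exact: xb.
  have len_T : (k + (T - L - k + L) = T)%N by lia.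
  by rewrite len_T in zb.
by exists w; split=> //; lra.
Qed.

Lemma Vs_asymptotic_tuple_dense E n (b : 'I_n -> X) : Dclass E -> (forall j, E (b j)) ->
  dense_in d (Vs E) (fun w => in_pow (Vs E) w /\ forall j, asymptotic (w j) (b j)).
Proof.
move=> E_cl Eb z z_Vs e e_gt0.
have [w w_spec] := choice _ (fun j => Vs_asymptotic_dense E_cl (z_Vs j) (Eb j) e_gt0).
exists w; split; last by move=> j; case: (w_spec j).
split=> j; have [_ wb] := w_spec j; last exact: wb.
exact: Vs_of_asymptotic E_cl (Eb j) wb.
Qed.

Lemma Vs_generic_chaotic E F G n eta r (b : 'I_n -> X) :
  Dclass E -> furstenberg F -> full_family F -> furstenberg G -> full_family G ->
  compatible d f F n -> compatible d f G n -> (0 < n)%N -> (forall j, E (b j)) ->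
  (forall i (j k : 'I_n), (j < k)%N -> eta <= d (iter i f (b j)) (iter i f (b k))) ->
  r < eta -> generic_chaotic d f F G n r (Vs E).
Proof.
move=> E_cl F_fam F_full G_fam G_full F_comp G_comp n_gt0 Eb b_distal lt_r.
pose j0 := Ordinal n_gt0.
split; first by exists (b j0); apply: Vs_of_asymptotic (Eb j0) (asymptotic_refl _).
have S_res : residual d (Vs E) (fun z : 'I_n -> X => in_pow (Vs E) z /\ F (S_set d f z r)).
  apply: residual_of_dense_Gdelta.
    exact: F_comp (@open_pairwise_far n r).
  move=> z z_Vs e e_gt0.
  have [w [[w_Vs wb] zw]] := Vs_asymptotic_tuple_dense E_cl Eb z_Vs e_gt0.
  by exists w; split=> //; split=> //; apply: S_set_of_asymptotic wb b_distal lt_r.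
have T_res : residual d (Vs E)
    (fun z : 'I_n -> X => in_pow (Vs E) z /\ forall p, G (T_set d f z (/ INR p.+1))).
  apply: residual_of_dense_Gdelta.
    by apply: Gdelta_bigcap => p; exact: G_comp (@open_pairwise_close n _).
  move=> z z_Vs e e_gt0.
  have [w [[w_Vs wb] zw]] :=
    Vs_asymptotic_tuple_dense (b := fun _ => b j0) E_cl (fun _ => Eb j0) z_Vs e_gt0.
  by exists w; split=> //; split=> // p; apply: T_set_of_asymptotic wb (inv_succ_gt0 p).
have [V [V_od V_scr]] := residual_and S_res T_res.
exists V; split=> // z /V_scr [[z_Vs SF] [_ TG]]; split=> //; split=> // e e_gt0.
have [p p_small] := inv_succ_small e_gt0.
case: G_fam => _ [_ G_up]; apply: G_up (TG p) _ => i close j k lt_jk.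
by have := close j k lt_jk; have := p_small p (leqnn p); lra.
Qed.

End Component.
End Dynamics.

Theorem corollary1p2
  (X : Type) (d : X -> X -> R) (f : X -> X)
  (Hmet : is_metric d) (Hcpt : mcompact d) (Hcont : mcontinuous d f)
  (Hshadow : s_limit_shadowing d f)
  (C : X -> Prop) (HC : chain_component d f C)
  (D : X -> Prop) (HD : Dclass d f C D)
  (F G : (nat -> Prop) -> Prop)
  (HF : furstenberg F) (HFfull : full_family F)
  (HG : furstenberg G) (HGfull : full_family G)
  (HFcomp : forall m : nat, (2 <= m)%N -> compatible d f F m)
  (HGcomp : forall m : nat, (2 <= m)%N -> compatible d f G m)
  (HFtrans : translation_invariant F)
  (n : nat) (Hn : (2 <= n)%N) (delta : R) (Hdelta : (0 < delta)%R)
  (a : 'I_n -> X) (HaD : forall j, D (a j))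
  (Hdistal : distal_tuple d f delta a) :
  forall E : X -> Prop, Dclass d f C E ->
  forall r : R, (0 < r)%R -> (r < delta)%R ->
    generic_chaotic d f F G n r (Vs d f C E).
Proof.
move=> E HE r _ lt_r.
have [eta [lt_delta a_distal]] := Hdistal.
have [b [Eb b_distal]] := distal_tuple_transfer Hmet Hcpt Hcont HC HD HE HaD a_distal.
apply: (Vs_generic_chaotic Hmet Hcpt Hcont HC Hshadow HE HF HFfull HG HGfull
  (HFcomp n Hn) (HGcomp n Hn) (ltnW Hn) Eb b_distal).
lra.
Qed.
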